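(* Fix $c \in \mathbb{R}$ and $p \in (0,1)$. For $x^{\text{obs}} > c$ let $\theta(p)$ be the unique solution $\theta$ of $F(x^{\text{obs}};\theta,c) = p$, and let $\theta^*(p) = x^{\text{obs}} - \Phi^{-1}(p)$ (the unique solution of $\Phi(x^{\text{obs}} - \theta) = p$). Then $\theta(p) - \theta^*(p) \to 0$ as $x^{\text{obs}} \to \infty$.
   Context: Let $\Phi$ denote the standard normal distribution function. For $c \in \mathbb{R}$, $a \ge c$ and $\theta \in \mathbb{R}$ define $$F(a;\theta,c) = \frac{\Phi(a-\theta) - \Phi(c-\theta)}{1-\Phi(c-\theta)}.$$ It is known that for each fixed $x^{\text{obs}} > c$ the map $\theta \mapsto F(x^{\text{obs}};\theta,c)$ is continuous and strictly decreasing from $\mathbb{R}$ onto $(0,1)$, so $\theta(p)$ is well defined. *)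

From Stdlib Require Import Reals.
From Coquelicot Require Import Coquelicot.
Open Scope R_scope.

Definition std_normal_pdf (t : R) : R := exp (- t ^ 2 / 2) / sqrt (2 * PI).

Definition Phi (x : R) : R :=
  RInt_gen std_normal_pdf (Rbar_locally m_infty) (at_point x).

Definition F (a theta c : R) : R :=
  (Phi (a - theta) - Phi (c - theta)) / (1 - Phi (c - theta)).

From Stdlib Require Import Reals Lra.
From Coquelicot Require Import Coquelicot.
Open Scope R_scope.

(* Write a := x - theta x and b := c - theta x, so that a - b = x - c and the defining
   equation reads 1 - Phi a = (1 - p) (1 - Phi b).  The normal tail satisfies
   1 - Phi (b + d) <= exp (- d^2/2) (1 - Phi b) for b, d >= 0, so for large x the
   truncation point b must be negative.  Then 1 - Phi a >= (1 - p)/2 keeps a bounded,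
   hence b -> -oo, Phi b -> 0 and Phi a -> p, i.e. a -> q.  The normalisation
   Phi (+oo) = 1 used throughout is the Gaussian integral, obtained by Feynman's trick:
   (int_0^x exp (-t^2/2))^2 + 2 int_0^1 exp (-x^2 (1+t^2)/2) / (1+t^2) dt has zero
   derivative in x. *)

Lemma ex_RInt_continuous_R (f : R -> R) (a b : R) :
  (forall x, continuous f x) -> ex_RInt f a b.
Proof. intros Hf; apply (ex_RInt_continuous (V := R_CompleteNormedModule)); auto. Qed.

Lemma RInt_ext_R (f g : R -> R) (a b : R) :
  (forall x, Rmin a b < x < Rmax a b -> f x = g x) -> RInt f a b = RInt g a b.
Proof. exact (RInt_ext (V := R_CompleteNormedModule) f g a b). Qed.

Lemma RInt_scal_R (f : R -> R) (a b l : R) :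
  ex_RInt f a b -> RInt (fun t => l * f t) a b = l * RInt f a b.
Proof. exact (RInt_scal (V := R_CompleteNormedModule) f a b l). Qed.

Lemma RInt_comp_lin_R (f : R -> R) (u v a b : R) :
  ex_RInt f (u * a + v) (u * b + v) ->
  RInt (fun y => u * f (u * y + v)) a b = RInt f (u * a + v) (u * b + v).
Proof. exact (RInt_comp_lin (V := R_CompleteNormedModule) f u v a b). Qed.

Definition gauss (t : R) : R := exp (- t ^ 2 / 2).

Lemma gauss_pos (t : R) : 0 < gauss t.
Proof. apply exp_pos. Qed.

Lemma gauss_continuous (t : R) : continuous gauss t.
Proof. apply (ex_derive_continuous (V := R_NormedModule)); unfold gauss; auto_derive; auto. Qed.

Lemma ex_RInt_gauss (a b : R) : ex_RInt gauss a b.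
Proof. apply ex_RInt_continuous_R, gauss_continuous. Qed.

Lemma gauss_add_le (s d : R) : 0 <= s -> 0 <= d -> gauss (s + d) <= gauss d * gauss s.
Proof.
  intros Hs Hd; unfold gauss; rewrite <- exp_plus.
  destruct (Req_dec (s * d) 0) as [E|E].
  - right; f_equal; nra.
  - left; apply exp_increasing; nra.
Qed.

Lemma gauss_lt_eventually (eps : R) :
  0 < eps -> exists M, 0 <= M /\ forall x, M <= x -> gauss x < eps.
Proof.
  intros Heps; exists (Rmax 1 (2 * Rabs (ln eps) + 1)).
  pose proof (Rmax_l 1 (2 * Rabs (ln eps) + 1)).
  pose proof (Rmax_r 1 (2 * Rabs (ln eps) + 1)).
  split; [lra |]; intros x Hx.
  pose proof (Rle_abs (- ln eps)); rewrite Rabs_Ropp in *.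
  assert (x <= x ^ 2) by nra.
  unfold gauss; rewrite <- (exp_ln eps Heps); apply exp_increasing; lra.
Qed.

Definition gauss_int (x : R) : R := RInt gauss 0 x.

Lemma is_derive_gauss_int (x : R) : is_derive gauss_int x (gauss x).
Proof.
  apply (is_derive_RInt (V := R_NormedModule) gauss gauss_int 0 x).
  - apply filter_forall; intros y.
    apply (RInt_correct (V := R_CompleteNormedModule)), ex_RInt_gauss.
  - apply gauss_continuous.
Qed.

Lemma gauss_int_nonneg (x : R) : 0 <= x -> 0 <= gauss_int x.
Proof.
  intros Hx; apply RInt_ge_0; [lra | apply ex_RInt_gauss |].
  intros t _; apply Rlt_le, gauss_pos.
Qed.

Definition feynman_integrand (x t : R) : R :=
  exp (- (x ^ 2 * (1 + t ^ 2)) / 2) / (1 + t ^ 2).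

Definition feynman_int (x : R) : R := RInt (feynman_integrand x) 0 1.

Lemma feynman_integrand_continuous (x t : R) : continuous (feynman_integrand x) t.
Proof.
  apply (ex_derive_continuous (V := R_NormedModule)); unfold feynman_integrand.
  auto_derive; nra.
Qed.

Lemma ex_RInt_feynman_integrand (x a b : R) : ex_RInt (feynman_integrand x) a b.
Proof. apply ex_RInt_continuous_R, feynman_integrand_continuous. Qed.

Lemma Derive_feynman_integrand (u t : R) :
  Derive (fun z => feynman_integrand z t) u = - u * gauss u * gauss (u * t).
Proof.
  apply is_derive_unique; unfold feynman_integrand, gauss.
  auto_derive; [nra |].
  rewrite (Rmult_assoc (- u)), <- exp_plus. replace (- u ^ 2 / 2 + - (u * t) ^ 2 / 2)
    with (- (u * (u * 1) * (1 + t * (t * 1))) * / 2) by field.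
  field; nra.
Qed.

Lemma continuity_2d_pt_Derive_feynman_integrand (x t : R) :
  continuity_2d_pt (fun u v => Derive (fun z => feynman_integrand z v) u) x t.
Proof.
  assert (Hgauss : forall y, continuity_pt gauss y)
    by (intros y; apply continuity_pt_filterlim, gauss_continuous).
  eapply continuity_2d_pt_ext; [intros u v; symmetry; apply Derive_feynman_integrand |].
  apply continuity_2d_pt_mult; [apply continuity_2d_pt_mult |].
  - apply continuity_2d_pt_opp, continuity_2d_pt_id1.
  - apply (continuity_1d_2d_pt_comp gauss (fun u _ => u)); auto.
    apply continuity_2d_pt_id1.
  - apply (continuity_1d_2d_pt_comp gauss (fun u v => u * v)); auto.
    apply continuity_2d_pt_mult; [apply continuity_2d_pt_id1 | apply continuity_2d_pt_id2].
Qed.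

(* Differentiate under the integral sign, then substitute s = x t. *)
Lemma is_derive_feynman_int (x : R) : is_derive feynman_int x (- gauss x * gauss_int x).
Proof.
  replace (- gauss x * gauss_int x)
    with (RInt (fun t => Derive (fun u => feynman_integrand u t) x) 0 1).
  - apply is_derive_RInt_param.
    + apply filter_forall; intros y t _; unfold feynman_integrand; auto_derive; nra.
    + intros t _; apply continuity_2d_pt_Derive_feynman_integrand.
    + apply filter_forall; intros y; apply ex_RInt_feynman_integrand.
  - rewrite (RInt_ext_R _ (fun t => - gauss x * (x * gauss (x * t + 0))))
      by (intros t _; rewrite Derive_feynman_integrand, Rplus_0_r; ring).
    rewrite RInt_scal_R.
    2: { apply ex_RInt_continuous_R; intros t.
         apply (ex_derive_continuous (V := R_NormedModule)); unfold gauss; auto_derive; auto. }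
    rewrite RInt_comp_lin_R by apply ex_RInt_gauss.
    unfold gauss_int; do 2 f_equal; ring.
Qed.

Lemma feynman_int_0 : feynman_int 0 = PI / 4.
Proof.
  unfold feynman_int; rewrite (RInt_ext_R _ (fun t => / (1 + t ^ 2))).
  2: { intros t _; unfold feynman_integrand.
       replace (- (0 ^ 2 * (1 + t ^ 2)) / 2) with 0 by field.
       rewrite exp_0; unfold Rdiv; ring. }
  rewrite <- atan_1; replace (atan 1) with (atan 1 - atan 0) by (rewrite atan_0; ring).
  apply (is_RInt_unique (V := R_CompleteNormedModule)).
  apply (is_RInt_derive (V := R_CompleteNormedModule) atan).
  - intros t _; apply is_derive_Reals, derivable_pt_lim_atan.
  - intros t _; apply (ex_derive_continuous (V := R_NormedModule)).
    auto_derive; simpl; nra.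
Qed.

Lemma gauss_int_sqr_add_feynman_int (x : R) : gauss_int x ^ 2 + 2 * feynman_int x = PI / 2.
Proof.
  set (K := fun y => gauss_int y ^ 2 + 2 * feynman_int y).
  assert (HK : forall y, is_derive K y 0).
  { intros y; evar (l : R); replace 0 with l; unfold l.
    - apply (is_derive_plus (K := R_AbsRing) (V := R_NormedModule)).
      + apply is_derive_pow, is_derive_gauss_int.
      + apply is_derive_scal, is_derive_feynman_int.
    - unfold plus; simpl; ring. }
  assert (K0 : K 0 = PI / 2)
    by (unfold K, gauss_int; rewrite RInt_point, feynman_int_0; unfold zero; simpl; field).
  change (K x = PI / 2); rewrite <- K0.
  destruct (Rtotal_order x 0) as [Hx | [-> | Hx]]; [| reflexivity |].
  - apply (eq_is_derive (V := R_NormedModule)); auto.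
  - symmetry; apply (eq_is_derive (V := R_NormedModule)); auto.
Qed.

Lemma feynman_int_bounds (x : R) : 0 <= feynman_int x <= gauss x.
Proof.
  assert (Hint : forall t, 0 < feynman_integrand x t <= gauss x).
  { intros t; unfold feynman_integrand, gauss.
    assert (Ht : 1 <= 1 + t ^ 2) by nra.
    pose proof (exp_pos (- (x ^ 2 * (1 + t ^ 2)) / 2)) as Hpos.
    assert (Hle : exp (- (x ^ 2 * (1 + t ^ 2)) / 2) <= exp (- x ^ 2 / 2)).
    { destruct (Req_dec (x ^ 2 * t ^ 2) 0) as [E|E].
      - right; f_equal; nra.
      - left; apply exp_increasing; nra. }
    split; [apply Rdiv_lt_0_compat; lra |].
    apply Rle_trans with (exp (- (x ^ 2 * (1 + t ^ 2)) / 2)); [| exact Hle].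
    apply Rmult_le_reg_r with (1 + t ^ 2); [lra |].
    unfold Rdiv; rewrite Rmult_assoc, Rinv_l by lra; nra. }
  unfold feynman_int; split.
  - apply RInt_ge_0; [lra | apply ex_RInt_feynman_integrand |].
    intros t _; apply Rlt_le, Hint.
  - apply Rle_trans with (RInt (fun _ => gauss x) 0 1).
    + apply RInt_le; [lra | apply ex_RInt_feynman_integrand | apply ex_RInt_const |].
      intros t _; apply Hint.
    + rewrite (RInt_const (V := R_CompleteNormedModule)).
      unfold scal; simpl; unfold mult; simpl; lra.
Qed.

Lemma gauss_int_defect (x : R) : 0 <= x ->
  0 <= sqrt (PI / 2) - gauss_int x /\
  (sqrt (PI / 2) - gauss_int x) * sqrt (PI / 2) <= 2 * gauss x.
Proof.
  intros Hx; pose proof (gauss_int_sqr_add_feynman_int x) as HK.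
  pose proof (feynman_int_bounds x) as [H0 H1].
  pose proof (gauss_int_nonneg x Hx) as HG.
  pose proof PI2_1.
  assert (HL : sqrt (PI / 2) * sqrt (PI / 2) = PI / 2) by (apply sqrt_sqrt; lra).
  pose proof (sqrt_pos (PI / 2)).
  simpl in HK.
  assert (HGL : gauss_int x <= sqrt (PI / 2)) by nra.
  split; [lra |].
  apply Rle_trans with ((sqrt (PI / 2) - gauss_int x) * (sqrt (PI / 2) + gauss_int x)); nra.
Qed.

Lemma sqrt_2PI_pos : 0 < sqrt (2 * PI).
Proof. apply sqrt_lt_R0; pose proof PI_RGT_0; lra. Qed.

Lemma std_normal_pdf_gauss (t : R) : std_normal_pdf t = gauss t / sqrt (2 * PI).
Proof. reflexivity. Qed.

Lemma std_normal_pdf_pos (t : R) : 0 < std_normal_pdf t.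
Proof. apply Rdiv_lt_0_compat; [apply gauss_pos | apply sqrt_2PI_pos]. Qed.

Lemma std_normal_pdf_continuous (t : R) : continuous std_normal_pdf t.
Proof.
  apply (ex_derive_continuous (V := R_NormedModule)); unfold std_normal_pdf.
  auto_derive; pose proof sqrt_2PI_pos; lra.
Qed.

Lemma ex_RInt_std_normal_pdf (a b : R) : ex_RInt std_normal_pdf a b.
Proof. apply ex_RInt_continuous_R, std_normal_pdf_continuous. Qed.

Definition Phi0 (x : R) : R := RInt std_normal_pdf 0 x.

Lemma RInt_std_normal_pdf (a b : R) : RInt std_normal_pdf a b = Phi0 b - Phi0 a.
Proof.
  unfold Phi0; rewrite <- (RInt_Chasles (V := R_CompleteNormedModule) _ 0 a b)
    by apply ex_RInt_std_normal_pdf.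
  rewrite <- (opp_RInt_swap (V := R_CompleteNormedModule)) by apply ex_RInt_std_normal_pdf.
  unfold plus, opp; simpl; ring.
Qed.

Lemma Phi0_opp (x : R) : Phi0 (- x) = - Phi0 x.
Proof.
  unfold Phi0; pose proof (RInt_comp_lin_R std_normal_pdf (-1) 0 0 x) as E.
  replace (-1 * 0 + 0) with 0 in E by ring; replace (-1 * x + 0) with (- x) in E by ring.
  rewrite <- E by apply ex_RInt_std_normal_pdf.
  rewrite (RInt_ext_R _ (fun y => -1 * std_normal_pdf y)).
  - rewrite RInt_scal_R by apply ex_RInt_std_normal_pdf; ring.
  - intros y _; unfold std_normal_pdf; do 4 f_equal; ring.
Qed.

Lemma Phi0_upper_tail (x : R) : 0 <= x -> 0 <= 1 / 2 - Phi0 x <= gauss x.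
Proof.
  intros Hx; pose proof (gauss_int_defect x Hx) as [H0 H1].
  assert (E : Phi0 x = gauss_int x / sqrt (2 * PI)).
  { unfold Phi0, gauss_int; rewrite (RInt_ext_R _ (fun t => / sqrt (2 * PI) * gauss t))
      by (intros t _; unfold std_normal_pdf, gauss, Rdiv; ring).
    rewrite RInt_scal_R by apply ex_RInt_gauss; unfold Rdiv; ring. }
  assert (Hs : sqrt (2 * PI) = 2 * sqrt (PI / 2)).
  { replace (2 * PI) with (2 * 2 * (PI / 2)) by field.
    rewrite sqrt_mult_alt, sqrt_square; lra. }
  pose proof PI2_1; pose proof (gauss_pos x).
  assert (HL : sqrt (PI / 2) * sqrt (PI / 2) = PI / 2) by (apply sqrt_sqrt; lra).
  assert (HLpos : 0 < sqrt (PI / 2)) by (apply sqrt_lt_R0; lra).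
  rewrite E, Hs.
  replace (1 / 2 - gauss_int x / (2 * sqrt (PI / 2)))
    with ((sqrt (PI / 2) - gauss_int x) / (2 * sqrt (PI / 2))) by (field; lra).
  split; [apply Rdiv_le_0_compat; lra |].
  apply Rmult_le_reg_r with (2 * sqrt (PI / 2)); [lra |].
  unfold Rdiv; rewrite Rmult_assoc, Rinv_l by lra; nra.
Qed.

Lemma Phi_eq_Phi0 (x : R) : Phi x = 1 / 2 + Phi0 x.
Proof.
  unfold Phi; apply (is_RInt_gen_unique (V := R_CompleteNormedModule)).
  intros P [eps HP].
  destruct (gauss_lt_eventually eps (cond_pos eps)) as [M [HM0 HM]].
  apply (Filter_prod _ _ _ (fun a => a < - M) (fun b => b = x)); [now exists (- M) | reflexivity |].
  intros a b Ha ->; exists (RInt std_normal_pdf a x); split.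
  - apply (RInt_correct (V := R_CompleteNormedModule)), ex_RInt_std_normal_pdf.
  - apply HP; change (Rabs (RInt std_normal_pdf a x - (1 / 2 + Phi0 x)) < eps).
    rewrite RInt_std_normal_pdf, <- (Ropp_involutive a), Phi0_opp.
    pose proof (Phi0_upper_tail (- a) ltac:(lra)); pose proof (HM (- a) ltac:(lra)).
    rewrite Rabs_left1; lra.
Qed.

Lemma RInt_std_normal_pdf_Phi (a b : R) : RInt std_normal_pdf a b = Phi b - Phi a.
Proof. rewrite RInt_std_normal_pdf, !Phi_eq_Phi0; lra. Qed.

Lemma Phi_opp (x : R) : Phi (- x) = 1 - Phi x.
Proof. rewrite !Phi_eq_Phi0, Phi0_opp; lra. Qed.

Lemma Phi_0 : Phi 0 = 1 / 2.
Proof. pose proof (Phi_opp 0) as H; rewrite Ropp_0 in H; lra. Qed.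

Lemma Phi_upper_tail (x : R) : 0 <= x -> 1 - Phi x <= gauss x.
Proof. intros Hx; rewrite Phi_eq_Phi0; pose proof (Phi0_upper_tail x Hx); lra. Qed.

Lemma Phi_lt (x y : R) : x < y -> Phi x < Phi y.
Proof.
  intros Hxy; cut (0 < RInt std_normal_pdf x y); [rewrite RInt_std_normal_pdf_Phi; lra |].
  apply RInt_gt_0; auto; intros; [apply std_normal_pdf_pos | apply std_normal_pdf_continuous].
Qed.

Lemma Phi_le (x y : R) : x <= y -> Phi x <= Phi y.
Proof. intros [H | ->]; [left; now apply Phi_lt | lra]. Qed.

Lemma Phi_lt_1 (x : R) : Phi x < 1.
Proof.
  apply Rlt_le_trans with (Phi (Rmax x 0 + 1)); [apply Phi_lt; pose proof (Rmax_l x 0); lra |].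
  rewrite Phi_eq_Phi0; pose proof (Phi0_upper_tail (Rmax x 0 + 1)).
  pose proof (Rmax_r x 0); lra.
Qed.

Lemma Phi_pos (x : R) : 0 < Phi x.
Proof. rewrite <- (Ropp_involutive x), Phi_opp; pose proof (Phi_lt_1 (- x)); lra. Qed.

Lemma Phi_lt_eventually_m_infty (eps : R) :
  0 < eps -> exists M, forall y, y <= M -> Phi y < eps.
Proof.
  intros Heps; destruct (gauss_lt_eventually eps Heps) as [M [HM0 HM]].
  exists (- M); intros y Hy; rewrite <- (Ropp_involutive y), Phi_opp.
  pose proof (Phi_upper_tail (- y) ltac:(lra)); pose proof (HM (- y) ltac:(lra)); lra.
Qed.

Lemma Phi_shift_increment_le (b d y : R) : 0 <= b <= y -> 0 <= d ->
  Phi (y + d) - Phi (b + d) <= gauss d * (Phi y - Phi b).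
Proof.
  intros Hby Hd; rewrite <- !RInt_std_normal_pdf_Phi.
  pose proof (RInt_comp_lin_R std_normal_pdf 1 d b y) as E.
  replace (1 * b + d) with (b + d) in E by ring; replace (1 * y + d) with (y + d) in E by ring.
  rewrite <- E by apply ex_RInt_std_normal_pdf.
  rewrite <- RInt_scal_R by apply ex_RInt_std_normal_pdf.
  apply RInt_le; [lra | | |].
  - apply ex_RInt_continuous_R; intros t.
    apply (ex_derive_continuous (V := R_NormedModule)); unfold std_normal_pdf.
    auto_derive; pose proof sqrt_2PI_pos; lra.
  - apply ex_RInt_continuous_R; intros t; apply (continuous_mult (K := R_AbsRing)).
    + apply continuous_const.
    + apply std_normal_pdf_continuous.
  - intros s Hs; rewrite !Rmult_1_l, !std_normal_pdf_gauss; unfold Rdiv.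
    rewrite <- Rmult_assoc; apply Rmult_le_compat_r.
    + apply Rlt_le, Rinv_0_lt_compat, sqrt_2PI_pos.
    + apply gauss_add_le; lra.
Qed.

Lemma Phi_upper_tail_shift_le (b d : R) : 0 <= b -> 0 <= d ->
  1 - Phi (b + d) <= gauss d * (1 - Phi b).
Proof.
  intros Hb Hd; apply Rle_plus_epsilon; intros eps Heps.
  destruct (gauss_lt_eventually eps Heps) as [M [HM0 HM]].
  pose proof (Rmax_l M b); pose proof (Rmax_r M b); set (y := Rmax M b) in *.
  pose proof (Phi_shift_increment_le b d y ltac:(lra) Hd).
  pose proof (Phi_upper_tail (y + d) ltac:(lra)); pose proof (HM (y + d) ltac:(lra)).
  pose proof (Phi_lt_1 y); pose proof (gauss_pos d).
  assert (gauss d * (Phi y - Phi b) <= gauss d * (1 - Phi b)) by (apply Rmult_le_compat_l; lra).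
  lra.
Qed.

Lemma F_eq_Phi (a theta c p : R) : F a theta c = p ->
  Phi (a - theta) = p + (1 - p) * Phi (c - theta).
Proof.
  unfold F; intros <-; pose proof (Phi_lt_1 (c - theta)); field; lra.
Qed.

Section TruncatedQuantile.

Variables (p q a b : R).
Hypothesis hp : 0 < p < 1.
Hypothesis hq : Phi q = p.
Hypothesis hab : Phi a = p + (1 - p) * Phi b.

Lemma truncated_solution_gt_quantile : q < a.
Proof.
  destruct (Rlt_or_le q a) as [H | H]; [exact H | exfalso].
  pose proof (Phi_le a q H); pose proof (Phi_pos b); nra.
Qed.

Lemma truncation_point_neg : 0 <= a - b -> gauss (a - b) < 1 - p -> b < 0.
Proof.
  intros Hd Hg; destruct (Rlt_or_le b 0) as [H | H]; [exact H | exfalso].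
  pose proof (Phi_upper_tail_shift_le b (a - b) H Hd) as T.
  replace (b + (a - b)) with a in T by ring.
  pose proof (Phi_lt_1 b).
  assert (gauss (a - b) * (1 - Phi b) < (1 - p) * (1 - Phi b)) by (apply Rmult_lt_compat_r; lra).
  nra.
Qed.

Lemma gauss_truncated_solution_gt : b < 0 -> 0 <= a -> (1 - p) / 2 < gauss a.
Proof.
  intros Hb Ha; pose proof (Phi_upper_tail a Ha).
  pose proof (Phi_lt b 0 Hb); rewrite Phi_0 in *; nra.
Qed.

Lemma truncated_solution_lt (e : R) : Phi b < Phi e - p -> a < e.
Proof.
  intros Hb; destruct (Rlt_or_le a e) as [H | H]; [exact H | exfalso].
  pose proof (Phi_le e a H); pose proof (Phi_pos b); nra.
Qed.

End TruncatedQuantile.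

Theorem theorem2 (c p : R) (hp : 0 < p < 1) (q : R) (hq : Phi q = p)
  (theta : R -> R) (htheta : forall x : R, c < x -> F x (theta x) c = p) :
  is_lim (fun x : R => theta x - (x - q)) p_infty 0.
Proof.
  apply is_lim_spec; intros eps; simpl; pose proof (cond_pos eps) as Heps.
  assert (Hdelta : 0 < Phi (q + eps) - p) by (rewrite <- hq; pose proof (Phi_lt q (q + eps)); lra).
  destruct (gauss_lt_eventually (1 - p) ltac:(lra)) as [MD [HMD0 HMD]].
  destruct (gauss_lt_eventually ((1 - p) / 2) ltac:(lra)) as [MA [HMA0 HMA]].
  destruct (Phi_lt_eventually_m_infty _ Hdelta) as [MB HMB].
  exists (c + MD + MA + Rabs MB); intros x Hx.
  pose proof (Rabs_pos MB) as HMB1; pose proof (Rle_abs (- MB)) as HMB2.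
  rewrite Rabs_Ropp in HMB2.
  pose proof (F_eq_Phi _ _ _ _ (htheta x ltac:(lra))) as Hab.
  set (a := x - theta x) in *; set (b := c - theta x) in *.
  assert (Hd : a - b = x - c) by (unfold a, b; ring).
  pose proof (truncated_solution_gt_quantile p q a b hp hq Hab).
  assert (Hb : b < 0)
    by (apply (truncation_point_neg p a b Hab); rewrite Hd; [lra | apply HMD; lra]).
  assert (Ha : a < MA).
  { destruct (Rlt_or_le a MA) as [Ha | Ha]; [exact Ha | exfalso].
    pose proof (gauss_truncated_solution_gt p a b hp Hab Hb ltac:(lra)).
    pose proof (HMA a Ha); lra. }
  pose proof (truncated_solution_lt p a b hp Hab (q + eps) (HMB b ltac:(lra))).
  unfold a in *; rewrite Rabs_left1; lra.
Qed.
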